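(* Let $\tau_{U,Q}:U\to Q$ be a fibre bundle with local coordinates $(q^i,u^a)$, let $\Gamma:U\to TQ$ be smooth with $\tau_{TQ}\circ\Gamma=\tau_{U,Q}$, locally $\Gamma(q,u)=(q^i,\Gamma^i(q,u))$, and let $L:U\to\mathbb R$ be smooth. Let $\Sigma=\{\mu\in T^*_{\Gamma(u)}TQ:\ u\in U,\ (T_u\Gamma)^*\mu=dL(u)\}$ and define $H(q,p,u)=p_i\Gamma^i(q,u)-L(q,u)$. A curve $\sigma:[t_0,t_1]\to Q$ (in a chart) is a solution of the generalized variational problem determined by $\Sigma$ if and only if there exist curves $u(t)$ and $\tilde\mu(t)=(\tilde\mu_i(t))$ such that $$\frac{d\tilde\mu_i}{dt}=-\frac{\partial H}{\partial q^i}(q,\tilde\mu,u),\qquad \frac{\partial H}{\partial u^a}(q,\tilde\mu,u)=0,\qquad \frac{dq^i}{dt}=\frac{\partial H}{\partial p_i}(q,\tilde\mu,u)=\Gamma^i(q,u).$$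
   Context: A solution of the generalized variational problem determined by $\Sigma\subset T^*TQ$ is a curve $\sigma$ for which there exists a curve $\mu:[t_0,t_1]\to\Sigma$ with $\pi_{TTQ}(\mu(t))=\dot\sigma(t)$ and $\int_{t_0}^{t_1}\langle\mu(t),X^T(t,\dot\sigma(t))\rangle dt=0$ for all time-dependent vector fields $X=X^i(t,q)\partial_{q^i}$ vanishing at $(t_0,\sigma(t_0))$ and $(t_1,\sigma(t_1))$, where $X^T=X^i\partial_{q^i}+(\partial_tX^i+\dot q^j\partial_{q^j}X^i)\partial_{\dot q^i}$. Coordinates on $T^*TQ$: $\mu=\mu_idq^i+\tilde\mu_id\dot q^i$. *)

From Stdlib Require Import Reals ClassicalEpsilon.
From mathcomp Require Import ssreflect ssrfun ssrbool eqtype ssrnat seq fintype bigop.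
Set Implicit Arguments. Unset Strict Implicit.
Open Scope R_scope.

Definition vec (n : nat) := 'I_n -> R.

Definition rsum (n : nat) (F : 'I_n -> R) : R := \big[Rplus/0]_(i < n) F i.

Definition upd (n : nat) (x : vec n) (i : 'I_n) (s : R) : vec n :=
  fun j => if j == i then x j + s else x j.

(* i-th partial derivative of f at x (meaningful when it exists) *)
Definition pd (n : nat) (f : vec n -> R) (x : vec n) (i : 'I_n) : R :=
  epsilon (inhabits 0) (fun l => derivable_pt_lim (fun s => f (upd x i s)) 0 l).

Definition contn (n : nat) (f : vec n -> R) : Prop :=
  forall x eps, 0 < eps -> exists delta, 0 < delta /\
    forall y, (forall j, Rabs (y j - x j) < delta) -> Rabs (f y - f x) < eps.

Fixpoint Ck (n k : nat) (f : vec n -> R) {struct k} : Prop :=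
  match k with
  | O => contn f
  | S k' => contn f /\ forall i : 'I_n,
       (forall x, derivable_pt_lim (fun s => f (upd x i s)) 0 (pd f x i))
       /\ Ck k' (fun x => pd f x i)
  end.

Definition smooth (n : nat) (f : vec n -> R) : Prop := forall k, Ck k f.

Definition smooth2 (n m : nat) (F : vec n -> vec m -> R) : Prop :=
  smooth (fun z : vec (n + m) =>
            F (fun i => z (lshift m i)) (fun a => z (rshift n a))).

Definition smoothTD (n : nat) (X : R -> vec n -> vec n) : Prop :=
  forall i : 'I_n, smooth (fun z : vec (1 + n) =>
            X (z (lshift n ord0)) (fun j => z (rshift 1 j)) i).

(* derivative of a real curve (meaningful when it exists) *)
Definition dt (c : R -> R) (t : R) : R :=
  epsilon (inhabits 0) (fun l => derivable_pt_lim c t l).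

Fixpoint Ckc (k : nat) (c : R -> R) : Prop :=
  match k with
  | O => continuity c
  | S k' => (forall t, derivable_pt_lim c t (dt c t)) /\ Ckc k' (dt c)
  end.

Definition smooth_curve (c : R -> R) : Prop := forall k, Ckc k c.
Definition smooth_vcurve (n : nat) (c : R -> vec n) : Prop :=
  forall i, smooth_curve (fun t => c t i).

(* Coordinates: Gam(q,u) = (q, Gam^i(q,u)).  A covector mu at the point (q,v) of TQ
   has components mu = mq_i dq^i + mv_i dqdot^i. *)
Definition in_Sigma (n m : nat) (Gam : vec n -> vec m -> vec n)
    (L : vec n -> vec m -> R) (q v mq mv : vec n) : Prop :=
  exists u : vec m,
    (forall i, Gam q u i = v i) /\
    (forall j, mq j + rsum (fun i => mv i * pd (fun q' => Gam q' u i) q j)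
               = pd (fun q' => L q' u) q j) /\
    (forall a, rsum (fun i => mv i * pd (fun u' => Gam q u' i) u a)
               = pd (fun u' => L q u') u a).

(* <mu(t), X^T(t, sigma'(t))> *)
Definition pairing (n : nat) (X : R -> vec n -> vec n) (sigma : R -> vec n)
    (mq mv : R -> vec n) (t : R) : R :=
  rsum (fun i =>
    mq t i * X t (sigma t) i
    + mv t i * (dt (fun s => X s (sigma t) i) t
                + rsum (fun j => dt (fun s => sigma s j) t
                                 * pd (fun q => X t q i) (sigma t) j))).

Definition is_solution (n m : nat) (Gam : vec n -> vec m -> vec n)
    (L : vec n -> vec m -> R) (t0 t1 : R) (sigma : R -> vec n) : Prop :=
  exists mq mv : R -> vec n,
    smooth_vcurve mq /\ smooth_vcurve mv /\
    (forall t, t0 <= t <= t1 ->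
       in_Sigma Gam L (sigma t) (fun i => dt (fun s => sigma s i) t) (mq t) (mv t)) /\
    (forall X : R -> vec n -> vec n, smoothTD X ->
       (forall i, X t0 (sigma t0) i = 0) -> (forall i, X t1 (sigma t1) i = 0) ->
       exists pr : Riemann_integrable (pairing X sigma mq mv) t0 t1,
         RiemannInt pr = 0).

Definition Hfun (n m : nat) (Gam : vec n -> vec m -> vec n)
    (L : vec n -> vec m -> R) (q p : vec n) (u : vec m) : R :=
  rsum (fun i => p i * Gam q u i) - L q u.

From Stdlib Require Import Reals ClassicalEpsilon FunctionalExtensionality Lra.
From mathcomp Require Import ssreflect ssrfun ssrbool eqtype ssrnat seq fintype bigop.
From Coquelicot Require Import Coquelicot.
From HB Require Import structures.
Open Scope R_scope.
Set Implicit Arguments. Unset Strict Implicit.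

(* Testing the variational condition with the fields [X = phi(t) e_i] gives
   [int (mq_i phi + mv_i phi') = 0] for every [phi] vanishing at the endpoints,
   so [mq = dmv/dt] by the du Bois-Reymond lemma, and with the costate [mv] the
   conditions defining [Sigma] become Hamilton's equations for [H].  Conversely,
   when [mq = dmv/dt] the integrand [<mu, X^T>] is the total derivative of
   [mv_i X^i(t, sigma t)], which vanishes at both endpoints. *)

Lemma Rplus_associative : associative Rplus.
Proof. by move=> x y z; rewrite Rplus_assoc. Qed.

HB.instance Definition _ :=
  Monoid.isComLaw.Build R 0 Rplus Rplus_associative Rplus_comm Rplus_0_l.

Lemma rsum_ext n (F G : 'I_n -> R) : (forall i, F i = G i) -> rsum F = rsum G.
Proof. by move=> FG; apply: eq_bigr. Qed.

Lemma rsum0 n : rsum (fun _ : 'I_n => 0) = 0.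
Proof. exact: big1. Qed.

Lemma rsum_delta n (F : 'I_n -> R) i : rsum (fun j => if j == i then F j else 0) = F i.
Proof. by rewrite /rsum (bigD1 i) //= eqxx big1 ?Rplus_0_r // => j /negbTE ->. Qed.

Lemma derivable_pt_lim_rsum n (f : 'I_n -> R -> R) (l : 'I_n -> R) x :
  (forall i, derivable_pt_lim (f i) x (l i)) ->
  derivable_pt_lim (fun s => rsum (fun i => f i s)) x (rsum l).
Proof.
move=> Df; rewrite /rsum; elim: (index_enum _) => [|i r IH].
  rewrite big_nil; apply: (derivable_pt_lim_ext (fun _ => 0)) => [s|].
    by rewrite big_nil.
  exact: derivable_pt_lim_const.
rewrite big_cons; apply: (derivable_pt_lim_ext (fun s => f i s + \big[Rplus/0]_(j <- r) f j s)).
  by move=> s; rewrite big_cons.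
exact: derivable_pt_lim_plus.
Qed.

Lemma continuity_pt_rsum n (f : 'I_n -> R -> R) x :
  (forall i, continuity_pt (f i) x) -> continuity_pt (fun s => rsum (fun i => f i s)) x.
Proof.
move=> Cf; rewrite /rsum; elim: (index_enum _) => [|i r IH].
  by apply: continuity_pt_const => y z; rewrite !big_nil.
have -> : (fun s => \big[Rplus/0]_(j <- i :: r) f j s) =
          (f i + (fun s => \big[Rplus/0]_(j <- r) f j s))%F.
  by apply: functional_extensionality => s; rewrite big_cons.
exact: continuity_pt_plus.
Qed.

Lemma pd_eq n (f : vec n -> R) x i l :
  derivable_pt_lim (fun s => f (upd x i s)) 0 l -> pd f x i = l.
Proof.
move=> D; apply: (uniqueness_limite _ _ _ _ _ D).
by apply: epsilon_spec; exists l.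
Qed.

Lemma dt_eq c t l : derivable_pt_lim c t l -> dt c t = l.
Proof.
move=> D; apply: (uniqueness_limite _ _ _ _ _ D).
by apply: epsilon_spec; exists l.
Qed.

Lemma derivable_pt_lim_shift g t l :
  derivable_pt_lim (fun s => g (t + s)) 0 l <-> derivable_pt_lim g t l.
Proof.
split=> D eps eps_gt0; have [d Hd] := D eps eps_gt0; exists d => h h_neq0 h_lt;
  by have := Hd h h_neq0 h_lt; rewrite !(Rplus_0_l, Rplus_0_r).
Qed.

Lemma continuity_pt_abs f x eps : continuity_pt f x -> 0 < eps ->
  exists d, 0 < d /\ forall y, Rabs (y - x) < d -> Rabs (f y - f x) < eps.
Proof.
move=> Cf eps_gt0; have [d [d_gt0 Hd]] := Cf eps eps_gt0.
exists d; split=> // y yx; case: (Req_dec y x) => [->|y_neq_x].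
  by rewrite Rminus_eq_0 Rabs_R0.
by apply: Hd; split=> //; split=> //; apply: not_eq_sym.
Qed.

Lemma derivable_pt_lim_continuity_pt g t l : derivable_pt_lim g t l -> continuity_pt g t.
Proof. by move=> D; apply: derivable_continuous_pt; exists l. Qed.

Lemma smooth_curve_continuity c : smooth_curve c -> continuity c.
Proof. by move=> Sc; exact: (Sc 0%nat). Qed.

Lemma smooth_curve_derivable c t : smooth_curve c -> derivable_pt_lim c t (dt c t).
Proof. by move=> Sc; exact: (Sc 1%nat).1. Qed.

Lemma smooth_curve_dt c : smooth_curve c -> smooth_curve (dt c).
Proof. by move=> Sc k; exact: (Sc k.+1).2. Qed.

Lemma Ckc_S k c c' : (forall t, derivable_pt_lim c t (c' t)) -> Ckc k c' -> Ckc k.+1 c.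
Proof.
move=> Dc Cc'; have E : dt c = c'.
  by apply: functional_extensionality => t; exact: dt_eq.
by split; rewrite E.
Qed.

Lemma smooth_curve_const a : smooth_curve (fun _ => a).
Proof.
move=> k; elim: k a => [|k IH] a; first exact: continuity_const.
by apply: (Ckc_S (c' := fun _ => 0)) => // t; exact: derivable_pt_lim_const.
Qed.

Lemma smooth_curve_id : smooth_curve id.
Proof.
move=> [|k]; first exact: derivable_continuous derivable_id.
apply: (Ckc_S (c' := fun _ => 1)); [exact: derivable_pt_lim_id | exact: smooth_curve_const].
Qed.

Lemma Ckc_plus k f g : Ckc k f -> Ckc k g -> Ckc k (fun t => f t + g t).
Proof.
elim: k f g => [|k IH] f g; first exact: continuity_plus.
move=> [Df Cf] [Dg Cg]; apply: (Ckc_S (c' := fun t => dt f t + dt g t)); last exact: IH.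
by move=> t; exact: derivable_pt_lim_plus.
Qed.

Lemma smooth_curve_plus f g :
  smooth_curve f -> smooth_curve g -> smooth_curve (fun t => f t + g t).
Proof. by move=> Sf Sg k; exact: Ckc_plus. Qed.

Lemma smooth_curve_mult f g :
  smooth_curve f -> smooth_curve g -> smooth_curve (fun t => f t * g t).
Proof.
move=> Sf Sg k; elim: k f g Sf Sg => [|k IH] f g Sf Sg.
  by apply: continuity_mult; exact: smooth_curve_continuity.
apply: (Ckc_S (c' := fun t => dt f t * g t + f t * dt g t)).
  by move=> t; apply: derivable_pt_lim_mult; exact: smooth_curve_derivable.
by apply: Ckc_plus; apply: IH => //; exact: smooth_curve_dt.
Qed.

Lemma smooth_curve_minus f g :
  smooth_curve f -> smooth_curve g -> smooth_curve (fun t => f t - g t).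
Proof.
move=> Sf Sg; have -> : (fun t => f t - g t) = (fun t => f t + (fun _ => -1) t * g t).
  by apply: functional_extensionality => t /=; ring.
by apply: smooth_curve_plus => //; apply: smooth_curve_mult => //; exact: smooth_curve_const.
Qed.

Lemma upd0 N (x : vec N) a : upd x a 0 = x.
Proof. by apply: functional_extensionality => j; rewrite /upd; case: (j == a); rewrite ?Rplus_0_r. Qed.

Lemma upd_upd N (x : vec N) a r s : upd (upd x a r) a s = upd x a (r + s).
Proof. by apply: functional_extensionality => j; rewrite /upd; case: (j == a); rewrite ?Rplus_assoc. Qed.

Definition vcat n m (q : vec n) (u : vec m) : vec (n + m) :=
  fun k => match split k with inl i => q i | inr a => u a end.

Definition vuncurry n m (F : vec n -> vec m -> R) (z : vec (n + m)) : R :=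
  F (fun i => z (lshift m i)) (fun a => z (rshift n a)).

Section Concatenation.
Variables (n m : nat).

Lemma vcat_l (q : vec n) (u : vec m) i : vcat q u (lshift m i) = q i.
Proof. by rewrite /vcat (unsplitK (inl _ i)). Qed.

Lemma vcat_r (q : vec n) (u : vec m) a : vcat q u (rshift n a) = u a.
Proof. by rewrite /vcat (unsplitK (inr _ a)). Qed.

Lemma vuncurry_vcat (q : vec n) (u : vec m) F : vuncurry F (vcat q u) = F q u.
Proof.
by rewrite /vuncurry; congr F; apply: functional_extensionality => k; rewrite ?vcat_l ?vcat_r.
Qed.

Lemma upd_vcat_l (q : vec n) (u : vec m) j s : upd (vcat q u) (lshift m j) s = vcat (upd q j s) u.
Proof.
apply: functional_extensionality => k; rewrite -(splitK k).
by case: (split k) => [i|b] /=; rewrite /upd ?eq_lshift ?eq_rlshift !(vcat_l, vcat_r).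
Qed.

Lemma upd_vcat_r (q : vec n) (u : vec m) a s : upd (vcat q u) (rshift n a) s = vcat q (upd u a s).
Proof.
apply: functional_extensionality => k; rewrite -(splitK k).
by case: (split k) => [i|b] /=; rewrite /upd ?eq_lrshift ?eq_rshift !(vcat_l, vcat_r).
Qed.

Lemma derivable_pd_vuncurry_l (q : vec n) (u : vec m) (F : vec n -> vec m -> R) j : Ck 1 (vuncurry F) ->
  derivable_pt_lim (fun s => F (upd q j s) u) 0 (pd (vuncurry F) (vcat q u) (lshift m j)).
Proof.
move=> [_ /(_ (lshift m j)) [D _]]; apply: derivable_pt_lim_ext (D (vcat q u)) => s.
by rewrite upd_vcat_l vuncurry_vcat.
Qed.

Lemma derivable_pd_vuncurry_r (q : vec n) (u : vec m) (F : vec n -> vec m -> R) a : Ck 1 (vuncurry F) ->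
  derivable_pt_lim (fun s => F q (upd u a s)) 0 (pd (vuncurry F) (vcat q u) (rshift n a)).
Proof.
move=> [_ /(_ (rshift n a)) [D _]]; apply: derivable_pt_lim_ext (D (vcat q u)) => s.
by rewrite upd_vcat_r vuncurry_vcat.
Qed.

End Concatenation.

Lemma smooth2_derivable_l n m (F : vec n -> vec m -> R) q u j : smooth2 F ->
  derivable_pt_lim (fun s => F (upd q j s) u) 0 (pd (fun q' => F q' u) q j).
Proof.
move=> SF; have D := derivable_pd_vuncurry_l q u j (SF 1%nat).
by rewrite (pd_eq (f := fun q' => F q' u) D).
Qed.

Lemma smooth2_derivable_r n m (F : vec n -> vec m -> R) q u a : smooth2 F ->
  derivable_pt_lim (fun s => F q (upd u a s)) 0 (pd (fun u' => F q u') u a).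
Proof.
move=> SF; have D := derivable_pd_vuncurry_r q u a (SF 1%nat).
by rewrite (pd_eq (f := fun u' => F q u') D).
Qed.

Lemma contn_comp_coord N (c : 'I_N) f : continuity f -> contn (fun z : vec N => f (z c)).
Proof.
move=> Cf x eps eps_gt0; have [d [d_gt0 Hd]] := continuity_pt_abs (Cf (x c)) eps_gt0.
by exists d; split=> // y yx; apply: Hd.
Qed.

Lemma smooth_comp_coord N (c : 'I_N) f : smooth_curve f -> smooth (fun z : vec N => f (z c)).
Proof.
move=> Sf k; elim: k f Sf => [|k IH] f Sf.
  exact/contn_comp_coord/smooth_curve_continuity.
split=> [|i]; first exact/contn_comp_coord/smooth_curve_continuity.
have D x : derivable_pt_lim (fun s => f (upd x i s c)) 0 (if c == i then dt f (x c) else 0).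
  rewrite /upd; case: (c == i); last exact: derivable_pt_lim_const.
  by apply/derivable_pt_lim_shift; exact: smooth_curve_derivable.
split=> [x|]; first by rewrite (pd_eq (D x)).
have -> : (fun x => pd (fun z : vec N => f (z c)) x i) =
          (fun z => (if c == i then dt f else fun _ => 0) (z c)).
  by apply: functional_extensionality => x; rewrite (pd_eq (D x)); case: (c == i).
by apply: IH; case: (c == i); [exact: smooth_curve_dt | exact: smooth_curve_const].
Qed.

Lemma small_forall_ord N (P : 'I_N -> R -> Prop) :
  (forall j, exists d, 0 < d /\ forall h, Rabs h < d -> P j h) ->
  exists d, 0 < d /\ forall h, Rabs h < d -> forall j, P j h.
Proof.
move=> HP.
suff [d [d_gt0 Hd]] : exists d, 0 < d /\
    forall h, Rabs h < d -> forall j, j \in index_enum 'I_N -> P j h.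
  by exists d; split=> // h h_lt j; apply: Hd => //; exact: mem_index_enum.
elim: (index_enum _) => [|a r [dr [dr_gt0 Hr]]]; first by exists 1; split=> //; lra.
have [da [da_gt0 Ha]] := HP a.
exists (Rmin da dr); split; first exact: Rmin_glb_lt.
move=> h h_lt j; rewrite inE => /orP [/eqP ->|jr].
  by apply: Ha; apply: Rlt_le_trans h_lt (Rmin_l _ _).
by apply: Hr => //; apply: Rlt_le_trans h_lt (Rmin_r _ _).
Qed.

Lemma continuity_pt_contn_comp N (g : vec N -> R) (c : R -> vec N) t :
  contn g -> (forall k, continuity_pt (fun s => c s k) t) ->
  continuity_pt (fun s => g (c s)) t.
Proof.
move=> Cg Cc eps eps_gt0; have [d [d_gt0 Hd]] := Cg (c t) eps eps_gt0.
have [d' [d'_gt0 Hd']] : exists d', 0 < d' /\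
    forall h, Rabs h < d' -> forall k, Rabs (c (t + h) k - c t k) < d.
  apply: small_forall_ord => k; have [e [e_gt0 He]] := continuity_pt_abs (Cc k) d_gt0.
  by exists e; split=> // h h_lt; apply: He; rewrite Rplus_minus_l.
exists d'; split=> // y [_ yt]; rewrite /dist /= /R_dist in yt *.
by rewrite -(Rplus_minus t y); apply: Hd => k; apply: Hd'.
Qed.

Lemma derivable_pt_lim_mult_vanishing (p d : R -> R) t d' :
  continuity_pt p t -> derivable_pt_lim d t d' -> d t = 0 ->
  derivable_pt_lim (fun s => p s * d s) t (p t * d').
Proof.
move=> Cp Dd d0; apply/(derivable_pt_lim_D_in _ (fun _ => p t * d')).
have := limit_mul _ _ _ _ _ _ Cp (proj2 (derivable_pt_lim_D_in d (fun _ => d') t) Dd).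
rewrite /D_in d0; congr limit1_in; apply: functional_extensionality => s.
by rewrite /Rdiv; ring.
Qed.

Lemma pd_mvt N (f : vec N -> R) x a d :
  (forall y, derivable_pt_lim (fun s => f (upd y a s)) 0 (pd f y a)) ->
  exists th, Rabs th <= Rabs d /\ f (upd x a d) - f x = pd f (upd x a th) a * d.
Proof.
move=> Df.
have D th : derivable_pt_lim (fun s => f (upd x a s)) th (pd f (upd x a th) a).
  apply/derivable_pt_lim_shift; apply: derivable_pt_lim_ext (Df (upd x a th)) => s.
  by rewrite upd_upd.
have [th [th_range E]] := MVT_gen (fun s => f (upd x a s)) 0 d
  (fun th => pd f (upd x a th) a) (fun th _ => proj2 (is_derive_Reals _ _ _) (D th))
  (fun th _ => derivable_pt_lim_continuity_pt (D th)).
exists th; rewrite upd0 Rminus_0_r in E; split=> //.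
by move: th_range; rewrite /Rmin /Rmax; case: Rle_dec => _ ?; split_Rabs; lra.
Qed.

Section ChainRule.
Variables (N : nat) (f : vec N -> R).
Hypothesis f_C1 : Ck 1 f.

Let Df x a : derivable_pt_lim (fun s => f (upd x a s)) 0 (pd f x a) := (f_C1.2 a).1 x.
Let Cf a : contn (fun x => pd f x a) := (f_C1.2 a).2.

(* By the mean value theorem the increment equals [pd f y a * d s] at an
   intermediate point [y] that tends to [Q t], so only [d] has to be differentiated. *)
Lemma derivable_pt_lim_increment (Q : R -> vec N) a (d : R -> R) d' t :
  (forall j, continuity_pt (fun s => Q s j) t) -> derivable_pt_lim d t d' -> d t = 0 ->
  derivable_pt_lim (fun s => f (upd (Q s) a (d s)) - f (Q s)) t (pd f (Q t) a * d').
Proof.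
move=> CQ Dd d0.
have [th Hth] := choice _ (fun s => pd_mvt (Q s) (d s) (Df^~ a)).
have th0 : th t = 0 by apply: Rabs_eq_0; apply: Rle_antisym (Rabs_pos _);
  rewrite -Rabs_R0 -d0; exact: (Hth t).1.
have Cth : continuity_pt th t.
  move=> eps eps_gt0.
  have [e [e_gt0 He]] := continuity_pt_abs (derivable_pt_lim_continuity_pt Dd) eps_gt0.
  exists e; split=> // s [_ st]; rewrite /dist /= /R_dist th0 Rminus_0_r.
  by apply: Rle_lt_trans (Hth s).1 _; rewrite -(Rminus_0_r (d s)) -d0; exact: He.
have Cp : continuity_pt (fun s => pd f (upd (Q s) a (th s)) a) t.
  apply: (continuity_pt_contn_comp (g := (pd f)^~ a) (c := fun s => upd (Q s) a (th s))).
    exact: Cf.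
  move=> j; rewrite /upd; case: (j == a) => //.
  exact: (continuity_pt_plus (Q^~ j) th).
apply: (derivable_pt_lim_ext (fun s => pd f (upd (Q s) a (th s)) a * d s)).
  by move=> s; rewrite (Hth s).2.
by have := derivable_pt_lim_mult_vanishing Cp Dd d0; rewrite th0 upd0.
Qed.

(* Move the coordinates of [c s] away from those of [c t] one at a time. *)
Lemma derivable_pt_lim_comp_vec (c : R -> vec N) (c' : vec N) t :
  (forall j, derivable_pt_lim (fun s => c s j) t (c' j)) ->
  derivable_pt_lim (fun s => f (c s)) t (rsum (fun j => pd f (c t) j * c' j)).
Proof.
move=> Dc; rewrite /rsum.
set mix := fun (r : seq 'I_N) s => (fun j => if j \in r then c s j else c t j) : vec N.
have mix_t r : mix r t = c t.
  by apply: functional_extensionality => j; rewrite /mix; case: (j \in r).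
suff D : forall r, uniq r -> derivable_pt_lim (fun s => f (mix r s)) t
                               (\big[Rplus/0]_(j <- r) (pd f (c t) j * c' j)).
  apply: derivable_pt_lim_ext (D _ (index_enum_uniq _)) => s; congr f.
  by apply: functional_extensionality => j; rewrite /mix mem_index_enum.
elim=> [_|a r IH /andP [a_notin_r r_uniq]].
  rewrite big_nil; apply: (derivable_pt_lim_ext (fun _ => f (c t))); last first.
    exact: derivable_pt_lim_const.
  by move=> s; congr f; apply: functional_extensionality => j; rewrite /mix in_nil.
have mix_cons s : mix (a :: r) s = upd (mix r s) a (c s a - c t a).
  apply: functional_extensionality => j; rewrite /upd /mix in_cons.
  by case: eqP => [->|] //=; rewrite (negbTE a_notin_r); ring.
rewrite big_cons Rplus_comm.
apply: (derivable_pt_lim_ext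
  (fun s => f (mix r s) + (f (upd (mix r s) a (c s a - c t a)) - f (mix r s)))).
  by move=> s; rewrite mix_cons; ring.
apply: derivable_pt_lim_plus; first exact: IH.
rewrite -{2}(mix_t r); apply: derivable_pt_lim_increment.
- move=> j; rewrite /mix; case: (j \in r); last exact: continuity_pt_const.
  exact: derivable_pt_lim_continuity_pt (Dc j).
- rewrite -(Rminus_0_r (c' a)); apply: derivable_pt_lim_minus => //.
  exact: derivable_pt_lim_const.
- exact: Rminus_eq_0.
Qed.

End ChainRule.

Lemma continuity_continuous f x : continuity f -> continuous f x.
Proof. by move=> Cf; apply/continuity_pt_filterlim. Qed.

Lemma continuity_ex_RInt f a b : continuity f -> ex_RInt f a b.
Proof. by move=> Cf; apply: ex_RInt_continuous => x _; exact: continuity_continuous. Qed.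

Lemma exists_interior_near a b c e : a < b -> a <= c <= b -> 0 < e ->
  exists x, a < x < b /\ Rabs (x - c) < e.
Proof.
move=> ab cab e_gt0; set r := Rmin e (b - a) / 4.
have [r_gt0 [r_lt_e r_lt_ba]] : 0 < r /\ r < e /\ r < (b - a) / 2.
  have := Rmin_l e (b - a); have := Rmin_r e (b - a).
  have := Rmin_glb_lt e (b - a) 0 e_gt0 ltac:(lra); rewrite /r; lra.
case: (Rle_lt_dec c ((a + b) / 2)) => c_mid; [exists (c + r) | exists (c - r)];
  (split; [lra | split_Rabs; lra]).
Qed.

Lemma continuity_eq0_segment g a b : a < b -> continuity g ->
  (forall x, a < x < b -> g x = 0) -> forall x, a <= x <= b -> g x = 0.
Proof.
move=> ab Cg g0 c cab; case: (Req_dec (g c) 0) => // gc_neq0; exfalso.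
have [d [d_gt0 Hd]] := continuity_pt_abs (Cg c) (Rabs_pos_lt _ gc_neq0).
have [x [xab xc]] := exists_interior_near ab cab d_gt0.
by have := Hd x xc; rewrite g0 // Rminus_0_l Rabs_Ropp; lra.
Qed.

(* A bump of height [f c / 2] around [c] would give a positive integral. *)
Lemma RInt_nonneg_eq0 f a b : a < b -> continuity f ->
  (forall x, a < x < b -> 0 <= f x) -> is_RInt f a b 0 ->
  forall c, a < c < b -> f c = 0.
Proof.
move=> ab Cf f_ge0 If c cab; apply: Rle_antisym; last by apply: f_ge0.
apply: Rnot_lt_le => fc_gt0.
have [d [d_gt0 Hd]] := continuity_pt_abs (Cf c) (ltac:(lra) : 0 < f c / 2).
set a' := Rmax a (c - d / 2); set b' := Rmin b (c + d / 2).
have [aa' a'c] : a <= a' /\ a' < c by split; [exact: Rmax_l | apply: Rmax_lub_lt; lra].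
have [b'b cb'] : b' <= b /\ c < b' by split; [exact: Rmin_l | apply: Rmin_glb_lt; lra].
have If_left : 0 <= RInt f a a'.
  by apply: RInt_ge_0 => [||x xa]; [lra | exact: continuity_ex_RInt | apply: f_ge0; lra].
have If_right : 0 <= RInt f b' b.
  by apply: RInt_ge_0 => [||x xb]; [lra | exact: continuity_ex_RInt | apply: f_ge0; lra].
have If_mid : 0 < RInt f a' b'.
  apply: RInt_gt_0 => [|x xab|x _]; [lra | | exact: continuity_continuous].
  have := Rmax_r a (c - d / 2); have := Rmin_r b (c + d / 2); rewrite -/a' -/b' => ? ?.
  have : Rabs (f x - f c) < f c / 2 by apply: Hd; split_Rabs; lra.
  by split_Rabs; lra.
have := RInt_Chasles f a a' b (continuity_ex_RInt _ _ Cf) (continuity_ex_RInt _ _ Cf).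
have := RInt_Chasles f a' b' b (continuity_ex_RInt _ _ Cf) (continuity_ex_RInt _ _ Cf).
rewrite (is_RInt_unique _ _ _ _ If) /plus /=; lra.
Qed.

(* du Bois-Reymond: test with [phi = w * (g - h')], where [w] is a positive
   weight vanishing at the endpoints; after integrating [h * phi'] by parts the
   hypothesis becomes [int w (g - h')^2 = 0]. *)
Lemma weak_derivative_eq (g h : R -> R) t0 t1 : t0 < t1 ->
  smooth_curve g -> smooth_curve h ->
  (forall phi, smooth_curve phi -> phi t0 = 0 -> phi t1 = 0 ->
     is_RInt (fun t => g t * phi t + h t * dt phi t) t0 t1 0) ->
  forall t, t0 <= t <= t1 -> dt h t = g t.
Proof.
move=> t01 Sg Sh Hweak.
set e := fun t => g t - dt h t; set w := fun t => (t - t0) * (t1 - t).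
have Se : smooth_curve e by apply: smooth_curve_minus => //; exact: smooth_curve_dt.
have Sw : smooth_curve w.
  by apply: smooth_curve_mult; apply: smooth_curve_minus;
    (exact: smooth_curve_id || exact: smooth_curve_const).
set phi := fun t => w t * e t.
have Sphi : smooth_curve phi by exact: smooth_curve_mult.
have Iweak := Hweak phi Sphi ltac:(rewrite /phi /w; ring) ltac:(rewrite /phi /w; ring).
have Iparts : is_RInt (fun t => dt h t * phi t + h t * dt phi t) t0 t1 0.
  have <- : minus (h t1 * phi t1) (h t0 * phi t0) = 0.
    by rewrite /phi /w /minus /plus /opp /=; ring.
  apply: (is_RInt_derive (fun t => h t * phi t)) => [x _|x _].
    apply/is_derive_Reals; apply: (derivable_pt_lim_mult h phi); exact: smooth_curve_derivable.
  apply: continuity_continuous; apply: smooth_curve_continuity.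
  by apply: smooth_curve_plus; apply: smooth_curve_mult => //; exact: smooth_curve_dt.
have Iwe2 : is_RInt (fun t => w t * e t * e t) t0 t1 0.
  have -> : 0 = minus 0 0 by rewrite /minus /plus /opp /=; ring.
  apply: is_RInt_ext (is_RInt_minus _ _ _ _ _ _ Iweak Iparts) => x _.
  by rewrite /minus /plus /opp /= /phi /e; ring.
have e0 : forall x, t0 < x < t1 -> e x = 0.
  move=> x xt; have w_gt0 : 0 < w x by apply: Rmult_lt_0_compat; lra.
  have : w x * e x * e x = 0.
    apply: (RInt_nonneg_eq0 t01 _ _ Iwe2) => // [|y yt].
      by apply: smooth_curve_continuity; do 2 apply: smooth_curve_mult => //.
    rewrite Rmult_assoc; apply: Rmult_le_pos; last exact: Rle_0_sqr.
    by apply: Rmult_le_pos; lra.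
  by rewrite Rmult_assoc => /Rmult_integral [|/Rmult_integral []] //; lra.
move=> t tt; have := continuity_eq0_segment t01 (smooth_curve_continuity Se) e0 tt.
by rewrite /e; lra.
Qed.

Lemma pd_Hfun_p n m (Gam : vec n -> vec m -> vec n) (L : vec n -> vec m -> R) q p u j :
  pd (fun p' => Hfun Gam L q p' u) p j = Gam q u j.
Proof.
apply: pd_eq; rewrite /Hfun -(rsum_delta (Gam q u) j) -[X in derivable_pt_lim _ _ X]Rminus_0_r.
apply: derivable_pt_lim_minus; last exact: derivable_pt_lim_const.
apply: (derivable_pt_lim_rsum (f := fun i s => upd p j s i * Gam q u i)) => i.
rewrite /upd; case: (i == j); apply/is_derive_Reals; by auto_derive; [|ring].
Qed.

Section HamiltonianPartials.
Variables (n m : nat) (Gam : vec n -> vec m -> vec n) (L : vec n -> vec m -> R).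
Hypothesis HGam : forall i, smooth2 (fun q u => Gam q u i).
Hypothesis HL : smooth2 L.

Lemma pd_Hfun_q q p u j : pd (fun q' => Hfun Gam L q' p u) q j =
  rsum (fun i => p i * pd (fun q' => Gam q' u i) q j) - pd (fun q' => L q' u) q j.
Proof.
apply: pd_eq; apply: derivable_pt_lim_minus; last exact: smooth2_derivable_l.
apply: (derivable_pt_lim_rsum (f := fun i s => p i * Gam (upd q j s) u i)) => i.
apply: derivable_pt_lim_scal; exact: (smooth2_derivable_l (F := fun q u => Gam q u i)).
Qed.

Lemma pd_Hfun_u q p u a : pd (fun u' => Hfun Gam L q p u') u a =
  rsum (fun i => p i * pd (fun u' => Gam q u' i) u a) - pd (fun u' => L q u') u a.
Proof.
apply: pd_eq; apply: derivable_pt_lim_minus; last exact: smooth2_derivable_r.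
apply: (derivable_pt_lim_rsum (f := fun i s => p i * Gam q (upd u a s) i)) => i.
apply: derivable_pt_lim_scal; exact: (smooth2_derivable_r (F := fun q u => Gam q u i)).
Qed.

End HamiltonianPartials.

Definition test_field n (i : 'I_n) (phi : R -> R) : R -> vec n -> vec n :=
  fun s _ j => if j == i then phi s else 0.

Lemma smoothTD_test_field n (i : 'I_n) phi : smooth_curve phi -> smoothTD (test_field i phi).
Proof.
move=> Sphi j; rewrite /test_field; case: (j == i).
  exact: (smooth_comp_coord (lshift n ord0) Sphi).
exact: (smooth_comp_coord (lshift n ord0) (smooth_curve_const 0)).
Qed.

Lemma pairing_test_field n (i : 'I_n) phi (sigma mq mv : R -> vec n) t :
  pairing (test_field i phi) sigma mq mv t = mq t i * phi t + mv t i * dt phi t.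
Proof.
rewrite -(rsum_delta (fun _ => mq t i * phi t + mv t i * dt phi t) i); apply: rsum_ext => j.
rewrite (rsum_ext (G := fun _ => 0)) ?rsum0 => [|k]; last first.
  by rewrite (@pd_eq _ (fun q => test_field i phi t q j) _ _ _ (derivable_pt_lim_const _ _))
    Rmult_0_r.
rewrite /test_field; case: eqP => [->|_]; first by rewrite Rplus_0_r.
by rewrite (dt_eq (derivable_pt_lim_const 0 t)); ring.
Qed.

Lemma solution_costate_derivative n (sigma mq mv : R -> vec n) t0 t1 : t0 < t1 ->
  smooth_vcurve mq -> smooth_vcurve mv ->
  (forall X : R -> vec n -> vec n, smoothTD X ->
     (forall i, X t0 (sigma t0) i = 0) -> (forall i, X t1 (sigma t1) i = 0) ->
     exists pr : Riemann_integrable (pairing X sigma mq mv) t0 t1, RiemannInt pr = 0) ->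
  forall i t, t0 <= t <= t1 -> dt (fun s => mv s i) t = mq t i.
Proof.
move=> t01 Smq Smv Hint i; apply: weak_derivative_eq => // phi Sphi phi0 phi1.
have [pr Ipr] := Hint _ (smoothTD_test_field i Sphi)
  (fun j => ltac:(by rewrite /test_field phi0; case: (j == i)))
  (fun j => ltac:(by rewrite /test_field phi1; case: (j == i))).
have := RInt_correct _ _ _ (ex_RInt_Reals_1 _ _ _ pr).
rewrite (RInt_Reals _ _ _ pr) Ipr; apply: is_RInt_ext => t _.
exact: pairing_test_field.
Qed.

Section TotalDerivative.
Variables (n : nat) (X : R -> vec n -> vec n) (sigma mt : R -> vec n).
Hypothesis HX : smoothTD X.
Hypothesis Hsigma : smooth_vcurve sigma.
Hypothesis Hmt : smooth_vcurve mt.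

(* [smoothTD X] says exactly that each [vuncurry (Xi i)] is smooth. *)
Let Xi i (tau : vec 1) (q : vec n) : R := X (tau ord0) q i.
Let path s : vec (1 + n) := vcat (fun _ => s) (sigma s).
Let Xi_C1 i : Ck 1 (vuncurry (Xi i)) := HX i 1%nat.

Lemma dt_X_time i t q :
  dt (fun s => X s q i) t = pd (vuncurry (Xi i)) (vcat (fun _ => t) q) (lshift n ord0).
Proof.
apply: dt_eq; apply/derivable_pt_lim_shift.
apply: derivable_pt_lim_ext (derivable_pd_vuncurry_l _ q ord0 (Xi_C1 i)) => s.
by rewrite /Xi /upd eqxx.
Qed.

Lemma pd_X_space i t q j :
  pd (fun q' => X t q' i) q j = pd (vuncurry (Xi i)) (vcat (fun _ => t) q) (rshift 1 j).
Proof. exact: (pd_eq (derivable_pd_vuncurry_r (fun _ => t) q j (Xi_C1 i))). Qed.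

Lemma derivable_pt_lim_X_along i t :
  derivable_pt_lim (fun s => X s (sigma s) i) t
    (dt (fun s => X s (sigma t) i) t +
     rsum (fun j => dt (fun s => sigma s j) t * pd (fun q => X t q i) (sigma t) j)).
Proof.
set path' := vcat (fun _ : 'I_1 => 1) (fun j => dt (fun s => sigma s j) t).
apply: (derivable_pt_lim_ext (fun s => vuncurry (Xi i) (path s))).
  by move=> s; rewrite vuncurry_vcat.
have -> : dt (fun s => X s (sigma t) i) t +
    rsum (fun j => dt (fun s => sigma s j) t * pd (fun q => X t q i) (sigma t) j) =
    rsum (fun k => pd (vuncurry (Xi i)) (path t) k * path' k).
  rewrite /rsum big_split_ord /= big_ord1 dt_X_time /path' vcat_l Rmult_1_r.
  by congr Rplus; apply: eq_bigr => j _; rewrite pd_X_space vcat_r Rmult_comm.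
apply: derivable_pt_lim_comp_vec => // k; rewrite /path /path' /vcat.
case: (split k) => [_|j]; [exact: derivable_pt_lim_id | exact: smooth_curve_derivable].
Qed.

Lemma continuity_pt_pd_X_along i k t :
  continuity_pt (fun s => pd (vuncurry (Xi i)) (path s) k) t.
Proof.
apply: (continuity_pt_contn_comp (g := (pd (vuncurry (Xi i)))^~ k)).
  exact: ((Xi_C1 i).2 k).2.
move=> l; rewrite /path /vcat; case: (split l) => [_|j].
  exact: continuity_pt_id.
exact/smooth_curve_continuity.
Qed.

Let dmt s i := dt (fun r => mt r i) s.

Lemma derivable_pt_lim_costate_pairing t :
  derivable_pt_lim (fun s => rsum (fun i => mt s i * X s (sigma s) i)) t
    (pairing X sigma dmt mt t).
Proof.
apply: derivable_pt_lim_rsum => i; apply: (derivable_pt_lim_mult (mt^~ i)).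
  exact: smooth_curve_derivable.
exact: derivable_pt_lim_X_along.
Qed.

Lemma continuity_pt_pairing t : continuity_pt (pairing X sigma dmt mt) t.
Proof.
apply: continuity_pt_rsum => i; apply: continuity_pt_plus; apply: continuity_pt_mult.
- exact/smooth_curve_continuity/smooth_curve_dt.
- exact: derivable_pt_lim_continuity_pt (derivable_pt_lim_X_along i t).
- exact: smooth_curve_continuity.
apply: continuity_pt_plus.
  have -> : (fun s => dt (fun r => X r (sigma s) i) s) =
            (fun s => pd (vuncurry (Xi i)) (path s) (lshift n ord0)).
    by apply: functional_extensionality => s; rewrite dt_X_time.
  exact: continuity_pt_pd_X_along.
apply: continuity_pt_rsum => j; apply: continuity_pt_mult.
  exact/smooth_curve_continuity/smooth_curve_dt.
have -> : (fun s => pd (fun q => X s q i) (sigma s) j) =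
          (fun s => pd (vuncurry (Xi i)) (path s) (rshift 1 j)).
  by apply: functional_extensionality => s; rewrite pd_X_space.
exact: continuity_pt_pd_X_along.
Qed.

Lemma RiemannInt_pairing_eq0 t0 t1 : t0 <= t1 ->
  (forall i, X t0 (sigma t0) i = 0) -> (forall i, X t1 (sigma t1) i = 0) ->
  exists pr : Riemann_integrable (pairing X sigma dmt mt) t0 t1, RiemannInt pr = 0.
Proof.
move=> t01 X0 X1.
have Ipairing : is_RInt (pairing X sigma dmt mt) t0 t1
    (minus (rsum (fun i => mt t1 i * X t1 (sigma t1) i))
           (rsum (fun i => mt t0 i * X t0 (sigma t0) i))).
  apply: (is_RInt_derive (fun s => rsum (fun i => mt s i * X s (sigma s) i))) => x _; first exact/is_derive_Reals/derivable_pt_lim_costate_pairing.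
  by apply/continuity_pt_filterlim; exact: continuity_pt_pairing.
have boundary_eq0 tb : (forall i, X tb (sigma tb) i = 0) ->
    rsum (fun i => mt tb i * X tb (sigma tb) i) = 0.
  by move=> Xb; rewrite (rsum_ext (G := fun _ => 0)) ?rsum0 // => i; rewrite Xb Rmult_0_r.
rewrite !boundary_eq0 // /minus /plus /opp /= Ropp_0 Rplus_0_r in Ipairing.
exists (ex_RInt_Reals_0 _ _ _ (ex_intro _ _ Ipairing)).
by rewrite -RInt_Reals; exact: is_RInt_unique.
Qed.

End TotalDerivative.

Lemma choice_on (A B : Type) (P : A -> Prop) (S : A -> B -> Prop) : inhabited B ->
  (forall x, P x -> exists y, S x y) -> exists f : A -> B, forall x, P x -> S x (f x).
Proof.
move=> [b] HS; apply: (choice (fun x y => P x -> S x y)) => x.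
case: (excluded_middle_informative (P x)) => [/HS [y Sy]|notP]; first by exists y.
by exists b.
Qed.

Definition hamilton_equations n m (Gam : vec n -> vec m -> vec n) (L : vec n -> vec m -> R)
    (sigma : R -> vec n) (u : R -> vec m) (mt : R -> vec n) (t : R) : Prop :=
  (forall i : 'I_n, derivable_pt_lim (fun s => mt s i) t
      (- pd (fun q => Hfun Gam L q (mt t) (u t)) (sigma t) i)) /\
  (forall a : 'I_m, pd (fun u' => Hfun Gam L (sigma t) (mt t) u') (u t) a = 0) /\
  (forall i : 'I_n,
      derivable_pt_lim (fun s => sigma s i) t
        (pd (fun p => Hfun Gam L (sigma t) p (u t)) (mt t) i) /\
      pd (fun p => Hfun Gam L (sigma t) p (u t)) (mt t) i = Gam (sigma t) (u t) i).

Section Equivalence.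
Variables (n m : nat) (Gam : vec n -> vec m -> vec n) (L : vec n -> vec m -> R).
Hypothesis HGam : forall i, smooth2 (fun q u => Gam q u i).
Hypothesis HL : smooth2 L.
Variables (t0 t1 : R) (sigma : R -> vec n).
Hypothesis t01 : t0 < t1.
Hypothesis Hsigma : smooth_vcurve sigma.

(* The costate [mt] is the [dqdot]-component [mv] of the covector curve; its
   [dq]-component is then [dt mv]. *)
Lemma is_solution_hamilton_equations : is_solution Gam L t0 t1 sigma ->
  exists u mt, smooth_vcurve mt /\
    forall t, t0 <= t <= t1 -> hamilton_equations Gam L sigma u mt t.
Proof.
move=> [mq [mv [Smq [Smv [in_Sig Hint]]]]].
have [u Hu] := choice_on (inhabits (fun _ => 0)) in_Sig.
have dmv := solution_costate_derivative t01 Smq Smv Hint.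
exists u, mv; split=> // t tt; have [Egam [Eq Eu]] := Hu t tt.
split; [|split] => [i|a|i].
- rewrite pd_Hfun_q // -[X in derivable_pt_lim _ _ X](_ : dt (fun s => mv s i) t = _).
    exact: smooth_curve_derivable.
  by rewrite dmv //; have := Eq i; lra.
- by rewrite pd_Hfun_u // Eu; ring.
- by rewrite pd_Hfun_p Egam; split=> //; exact: smooth_curve_derivable.
Qed.

Lemma hamilton_equations_is_solution (u : R -> vec m) (mt : R -> vec n) :
  smooth_vcurve mt -> (forall t, t0 <= t <= t1 -> hamilton_equations Gam L sigma u mt t) ->
  is_solution Gam L t0 t1 sigma.
Proof.
move=> Smt Ham; exists (fun t i => dt (fun s => mt s i) t), mt.
split; first by move=> i; exact: smooth_curve_dt.
split=> //; split=> [t tt|X HX X0 X1].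
  have [Dmt [Hu Hsig]] := Ham t tt; exists (u t); split; [|split] => [i|j|a].
  - by have [Dsig <-] := Hsig i; rewrite (dt_eq Dsig).
  - by rewrite (dt_eq (Dmt j)) pd_Hfun_q //; ring.
  - by have := Hu a; rewrite pd_Hfun_u //; lra.
exact: (RiemannInt_pairing_eq0 HX Hsigma Smt (Rlt_le _ _ t01) X0 X1).
Qed.

End Equivalence.

Theorem mainTheorem7 (n m : nat) (Gam : vec n -> vec m -> vec n)
    (L : vec n -> vec m -> R)
    (HGam : forall i : 'I_n, smooth2 (fun q u => Gam q u i))
    (HL : smooth2 L)
    (t0 t1 : R) (Ht : t0 < t1)
    (sigma : R -> vec n) (Hsigma : smooth_vcurve sigma) :
  is_solution Gam L t0 t1 sigma <->
  exists (u : R -> vec m) (mt : R -> vec n),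
    smooth_vcurve mt /\
    forall t, t0 <= t <= t1 ->
      (forall i : 'I_n, derivable_pt_lim (fun s => mt s i) t
          (- pd (fun q => Hfun Gam L q (mt t) (u t)) (sigma t) i)) /\
      (forall a : 'I_m, pd (fun u' => Hfun Gam L (sigma t) (mt t) u') (u t) a = 0) /\
      (forall i : 'I_n,
          derivable_pt_lim (fun s => sigma s i) t
            (pd (fun p => Hfun Gam L (sigma t) p (u t)) (mt t) i) /\
          pd (fun p => Hfun Gam L (sigma t) p (u t)) (mt t) i = Gam (sigma t) (u t) i).
Proof.
split; first exact: is_solution_hamilton_equations.
by move=> [u [mt [Smt Ham]]]; exact: hamilton_equations_is_solution Ham.
Qed.
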